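(* Let $m$ and $n$ be positive integers with $m=O(n^r)$, where $r\in\mathbb{R}$ and $r\ge 1$. For every pair of positive integers $k,\ell$ with $k\ge 3$, there exists a positive integer $N_3=N_3(k,\ell)$ such that $px_{k,\ell}(K_{m,n})=2$ for every integer $n\ge N_3$.
   Context: Here $m=m(n)$ is regarded as a function of $n$ with $m=O(n^r)$. All graphs are finite, simple and undirected; $K_{m,n}$ is the complete bipartite graph with parts of sizes $m$ and $n$. An edge-coloring of a graph may assign the same color to adjacent edges. A tree $T$ in an edge-colored graph is a proper tree if no two adjacent edges of $T$ receive the same color. For $S\subseteq V(G)$ with $|S|\ge 2$, an $S$-tree is a tree in $G$ containing all vertices of $S$. $S$-trees $T_1,\dots,T_\ell$ are internally disjoint if $E(T_i)\cap E(T_j)=\emptyset$ and $V(T_i)\cap V(T_j)=S$ for all $i\ne j$. For a connected graph $G$ of order $n$ and integers $k,\ell$ with $2\le k\le n$ and $1\le \ell\le \kappa_k(G)$ (where $\kappa_k(G)$ is the minimum, over all $k$-subsets $S$ of $V(G)$, of the maximum number of internally disjoint $S$-trees), the $(k,\ell)$-proper index $px_{k,\ell}(G)$ is the minimum number of colors in an edge-coloring of $G$ such that for every $k$-subset $S$ of $V(G)$ there exist $\ell$ internally disjoint proper $S$-trees. *)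

From mathcomp Require Import all_boot.
From Stdlib Require Import Reals.
Set Implicit Arguments. Unset Strict Implicit. Unset Printing Implicit Defensive.

(* A finite simple graph on a finType T is given by its edge set E, a set of
   2-element subsets of T. An edge-coloring is a function c on edges (its
   values off E are irrelevant). *)
Section Graphs.
Variable T : finType.

Definition simple_graph (E : {set {set T}}) : Prop :=
  forall e, e \in E -> #|e| = 2.

Definition adj_of (F : {set {set T}}) : rel T := fun x y => [set x; y] \in F.

Definition is_tree (E : {set {set T}}) (V : {set T}) (F : {set {set T}}) : Prop :=
  [/\ V != set0,
      F \subset E,
      (forall e, e \in F -> e \subset V),
      (forall x y, x \in V -> y \in V -> connect (adj_of F) x y) &
      ~ (exists s : seq T, [/\ 2 < size s, uniq s & cycle (adj_of F) s])].

Definition proper_tree (c : {set T} -> nat) (F : {set {set T}}) : Prop :=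
  forall e1 e2, e1 \in F -> e2 \in F -> e1 != e2 -> e1 :&: e2 != set0 ->
    c e1 <> c e2.

Definition kl_good (E : {set {set T}}) (k l : nat) (c : {set T} -> nat) : Prop :=
  forall S : {set T}, #|S| = k ->
    exists (V : 'I_l -> {set T}) (F : 'I_l -> {set {set T}}),
      [/\ (forall i, is_tree E (V i) (F i)),
          (forall i, S \subset V i),
          (forall i, proper_tree c (F i)) &
          (forall i j, i != j -> F i :&: F j = set0 /\ V i :&: V j = S)].

Definition coloring_with (E : {set {set T}}) (q : nat) (c : {set T} -> nat) : Prop :=
  forall e, e \in E -> c e < q.

Definition px_eq (E : {set {set T}}) (k l p : nat) : Prop :=
  (exists c, coloring_with E p c /\ kl_good E k l c) /\
  (forall q, q < p -> ~ exists c, coloring_with E q c /\ kl_good E k l c).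

End Graphs.

Definition K_edges (m n : nat) : {set {set ('I_m + 'I_n)%type}} :=
  [set [set inl i; inr j] | i : 'I_m, j : 'I_n].

Definition bigO_pow (m : nat -> nat) (r : R) : Prop :=
  exists (C : R) (N0 : nat), (0 < C)%R /\
    forall n : nat, (N0 <= n)%N -> (0 < n)%N ->
      (INR (m n) <= C * Rpower (INR n) r)%R.

From mathcomp Require Import all_boot zify.
From Stdlib Require Import Reals.
Set Implicit Arguments. Unset Strict Implicit. Unset Printing Implicit Defensive.

(* Colour the edge {a, b} of K_{m,n} by the parity of a + b, and sort the vertices
   into four classes by side and by parity of index.  A path whose q-th vertex lies
   in class q mod 4 alternates between the sides, and the colours of its edges
   alternate, so it is a proper tree.  Given a k-set S, each of the l paths has 8k
   slots: the u-th vertex s of S sits in slot 8u + class(s) and every other slot gets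
   a fresh vertex of the right class, used by no other path.  Each class has at
   least n/2 vertices, so n >= 18kl leaves enough of them.  No two vertices of S are
   consecutive on a path, hence every edge has a private endpoint and the paths are
   internally disjoint.  One colour is not enough: in a monochromatic proper tree
   the edge at a vertex is the only one, so the tree has at most two vertices.
   Only n <= m(n) is used. *)

Lemma adj_of_sym (T : finType) (F : {set {set T}}) : symmetric (adj_of F).
Proof. by move=> x y; rewrite /adj_of setUC. Qed.

Section MonochromaticTree.
Variables (T : finType) (E : {set {set T}}) (V : {set T}) (F : {set {set T}}).
Variable c : {set T} -> nat.
Hypotheses (treeF : is_tree E V F) (properF : proper_tree c F).
Hypothesis constF : {in F &, forall e1 e2, c e1 = c e2}.

Lemma monochromatic_connect e x y :
  e \in F -> x \in e -> connect (adj_of F) x y -> y \in e.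
Proof.
move=> eF + /connectP[s]; elim: s x => [|z s IH] x xe /=; first by move=> _ ->.
case/andP=> xz zs y_last; apply: IH zs y_last.
have -> : e = [set x; z].
  apply/eqP; apply/negPn/negP => ne; apply: (properF eF xz ne _ (constF eF xz)).
  by apply/set0Pn; exists x; rewrite inE xe set21.
exact: set22.
Qed.

Lemma monochromatic_tree_card : #|V| <= 2.
Proof.
case: treeF => /set0Pn[x xV] _ _ connV _.
have [sub | /subsetPn[y yV]] := boolP (V \subset [set x]).
  by rewrite (leq_trans (subset_leq_card sub)) // cards1.
rewrite in_set1 => yx.
case/connectP: (connV x y xV yV) => -[|z s] /=.
  by move=> _ eq_yx; rewrite eq_yx eqxx in yx.
case/andP=> xz _ _.
have /subset_leq_card : V \subset [set x; z].
  by apply/subsetP => w wV; apply: monochromatic_connect xz (set21 x z) (connV x w xV wV).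
by rewrite cards2 => /leq_trans; apply; rewrite ltnS leq_b1.
Qed.

End MonochromaticTree.

Lemma kl_good_colors_gt1 (T : finType) (E : {set {set T}}) k l q c :
  3 <= k <= #|T| -> 0 < l -> coloring_with E q c -> kl_good E k l c -> 1 < q.
Proof.
case/andP=> k_ge3 k_le l_gt0 c_lt_q good_c; rewrite ltnNge; apply/negP => q_le1.
have [S cardS] : exists S : {set T}, #|S| = k.
  have : 0 < #|[set A : {set T} | #|A| == k]| by rewrite card_draws bin_gt0.
  by case/card_gt0P => S; rewrite inE => /eqP; exists S.
have [V [F [trees covers proper _]]] := good_c S cardS.
pose i0 := Ordinal l_gt0.
have [_ FE _ _ _] := trees i0.
have constF : {in F i0 &, forall e1 e2, c e1 = c e2}.
  by move=> e1 e2 /(subsetP FE)/c_lt_q + /(subsetP FE)/c_lt_q; lia.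
have := monochromatic_tree_card (trees i0) (proper i0) constF.
have := subset_leq_card (covers i0); lia.
Qed.

Lemma cycle_neighbours (T : eqType) (e : rel T) s x :
  uniq s -> 2 < size s -> cycle e s -> x \in s ->
  exists y z, [/\ y \in s, z \in s, uniq [:: x; y; z], e x y & e z x].
Proof.
move=> s_uniq s_gt2 s_cycle /rot_to[i s' rot_s].
have mem_s' w : w \in x :: s' -> w \in s by rewrite -rot_s mem_rot.
have : uniq (x :: s') by rewrite -rot_s rot_uniq.
have : cycle e (x :: s') by rewrite -rot_s rot_cycle.
have : 2 < size (x :: s') by rewrite -rot_s size_rot.
case: s' mem_s' {rot_s} => [|y t] //; case/lastP: t => [|t z] // mem_s' _ + xyz_uniq.
rewrite /= rcons_path last_rcons => /and3P[xy _ zx].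
have xyz : uniq [:: x; y; z].
  by apply: subseq_uniq xyz_uniq; rewrite /= !eqxx sub1seq mem_rcons mem_head.
by exists y, z; split => //; apply: mem_s'; rewrite !inE ?mem_rcons ?inE eqxx ?orbT.
Qed.

Section PathTree.
Variables (T : finType) (L : nat) (p : nat -> T).
Hypothesis p_inj : forall i j, i < L -> j < L -> p i = p j -> i = j.

Definition path_vertices : {set T} := [set p q | q : 'I_L].
Definition path_edges : {set {set T}} := [set [set p q; p q.+1] | q : 'I_L.-1].

Lemma path_verticesP x : reflect (exists2 q, q < L & x = p q) (x \in path_vertices).
Proof.
by apply: (iffP imsetP) => [[q _ ->]|[q qL ->]]; [exists q | exists (Ordinal qL)].
Qed.

Lemma path_edgesP e :
  reflect (exists2 q, q.+1 < L & e = [set p q; p q.+1]) (e \in path_edges).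
Proof.
apply: (iffP imsetP) => [[q _ ->]|[q qL ->]]; first by exists q; rewrite // -ltn_predRL.
have qL' : q < L.-1 by rewrite ltn_predRL.
by exists (Ordinal qL').
Qed.

Lemma path_edge_sub e : e \in path_edges -> e \subset path_vertices.
Proof.
case/path_edgesP => q qL ->; apply/subsetP => x; rewrite in_set2.
by case/orP => /eqP ->; apply/path_verticesP; [exists q => //; exact: ltnW | exists q.+1].
Qed.

Lemma path_connect q : q < L -> connect (adj_of path_edges) (p 0) (p q).
Proof.
elim: q => [|q IH] qL; first exact: connect0.
apply: connect_trans (IH (ltnW qL)) (connect1 _).
by apply/path_edgesP; exists q.
Qed.

Lemma path_adj x y : adj_of path_edges x y -> x != y ->
  exists2 q, q.+1 < L & x = p q /\ y = p q.+1 \/ x = p q.+1 /\ y = p q.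
Proof.
move=> /path_edgesP[q qL exy] x_y; exists q => //.
have : y \in [set p q; p q.+1] by rewrite -exy set22.
have : x \in [set p q; p q.+1] by rewrite -exy set21.
rewrite !in_set2 => /orP[]/eqP ex /orP[]/eqP ey; move: x_y; rewrite ex ey ?eqxx //.
all: move=> _; by [left | right].
Qed.

Definition path_index x := index x (mkseq p L).

Lemma path_indexK q : q < L -> path_index (p q) = q.
Proof.
move=> qL; rewrite /path_index -(nth_mkseq (p 0) p qL) index_uniq ?size_mkseq //.
rewrite map_inj_in_uniq ?iota_uniq // => i j; rewrite !mem_iota /=; exact: p_inj.
Qed.

Lemma path_acyclic :
  ~ exists s : seq T, [/\ 2 < size s, uniq s & cycle (adj_of path_edges) s].
Proof.
case=> s [s_gt2 s_uniq s_cycle].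
have [x0 x0s] : exists x0, x0 \in s.
  by case: s s_gt2 {s_uniq s_cycle} => // x0 s; exists x0; exact: mem_head.
have [x xs x_max] := @arg_maxnP _ x0 (mem s) path_index x0s.
have [y [z [ys zs xyz xy zx]]] := cycle_neighbours s_uniq s_gt2 s_cycle xs.
move: xyz; rewrite /= !inE !negb_or => /and3P[/andP[x_y x_z] y_z _].
have below w : w \in s -> adj_of path_edges x w -> x != w ->
    exists2 q, q.+1 < L & x = p q.+1 /\ w = p q.
  move=> ws xw /(path_adj xw)[q qL [[ex ew]|]]; last by exists q.
  by have := x_max w ws; rewrite ex ew !path_indexK ?(ltnW qL) //= ltnn.
have [q qL [xq yq]] := below y ys xy x_y.
have xz : adj_of path_edges x z by rewrite adj_of_sym.
have [q' q'L [xq' zq']] := below z zs xz x_z.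
suff qq' : q = q' by rewrite yq zq' qq' eqxx in y_z.
by have := p_inj qL q'L; rewrite -xq -xq' => /(_ erefl) [].
Qed.

Lemma path_tree (E : {set {set T}}) :
  0 < L -> (forall q, q.+1 < L -> [set p q; p q.+1] \in E) ->
  is_tree E path_vertices path_edges.
Proof.
move=> L_gt0 edgesE; split.
- by apply/set0Pn; exists (p 0); apply/path_verticesP; exists 0.
- by apply/subsetP => e /path_edgesP[q qL ->]; exact: edgesE.
- exact: path_edge_sub.
- move=> x y /path_verticesP[qx qxL ->] /path_verticesP[qy qyL ->].
  apply: connect_trans (path_connect qyL).
  by rewrite (sym_connect_sym (@adj_of_sym _ _)); exact: path_connect.
- exact: path_acyclic.
Qed.

Lemma path_proper (c : {set T} -> nat) :
  (forall q, q.+2 < L -> c [set p q; p q.+1] != c [set p q.+1; p q.+2]) ->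
  proper_tree c path_edges.
Proof.
move=> alternating e1 e2 /path_edgesP[q1 q1L ->] /path_edgesP[q2 q2L ->] e12.
case/set0Pn => x /setIP[]; rewrite !in_set2.
have same a b : a < L -> b < L -> x == p a -> x == p b -> a = b.
  by move=> aL bL /eqP-> /eqP/p_inj; apply.
have alternating_rev a : a.+2 < L -> c [set p a.+1; p a.+2] <> c [set p a; p a.+1].
  by move=> aL /eqP; rewrite eq_sym (negbTE (alternating a aL)).
case/orP=> x1 /orP[] x2.
- by move: e12; rewrite (same q1 q2) ?eqxx //; exact: ltnW.
- have q1E := same q1 q2.+1 (ltnW q1L) q2L x1 x2; subst q1; exact: alternating_rev.
- have q2E := same q1.+1 q2 q1L (ltnW q2L) x1 x2; subst q2; exact/nesym/alternating_rev.
- by case: (same q1.+1 q2.+1 q1L q2L x1 x2) e12 => ->; rewrite eqxx.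
Qed.

End PathTree.

Section CompleteBipartite.
Variables M n : nat.
Local Notation T := ('I_M + 'I_n)%type.

Definition label (x : T) : nat := match x with inl a => a | inr b => b end.

Definition parity_coloring (e : {set T}) : nat := odd (\sum_(x in e) label x).

Definition vertex_class (x : T) : nat :=
  match x with inl a => (odd a).*2 | inr b => (odd b).*2.+1 end.

Lemma vertex_class_lt4 x : vertex_class x < 4.
Proof. by case: x => a /=; case: odd. Qed.

Lemma class_step_edge x y q :
  vertex_class x = q %% 4 -> vertex_class y = q.+1 %% 4 -> [set x; y] \in K_edges M n.
Proof.
case: x => a; case: y => b /= xq yq; try lia.
- by apply/imset2P; exists a b.
- by rewrite setUC; apply/imset2P; exists b a.
Qed.

Lemma class_step_coloring x y q :
  vertex_class x = q %% 4 -> vertex_class y = q.+1 %% 4 ->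
  parity_coloring [set x; y] = odd q.
Proof.
move=> xq yq.
have x_y : x != y by apply: contraTneq isT => exy; move: yq; rewrite -exy xq; lia.
rewrite /parity_coloring big_setU1 ?in_set1 //= big_set1.
by case: x y xq yq {x_y} => a [] b /=; lia.
Qed.

Lemma card_vertex_class b : b < 4 -> n <= M -> n./2 <= #|[set x | vertex_class x == b]|.
Proof.
move=> b_lt4 nM.
have lt_n (j : 'I_n./2) : j.*2 + odd b./2 < n by have := ltn_ord j; lia.
pose f j :=
  if odd b then inr (Ordinal (lt_n j)) else inl (Ordinal (leq_trans (lt_n j) nM)).
have f_inj : injective f.
  by move=> i j /(congr1 label); rewrite /f; case: ifP => _ /= e; apply: ord_inj; lia.
rewrite -[n./2]card_ord -(card_imset _ f_inj); apply/subset_leq_card/subsetP.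
by move=> _ /imsetP[j _ ->]; rewrite inE /f; case: ifP => /= odd_b; lia.
Qed.

Section Routes.
Variables (l : nat) (S : {set T}) (x0 : T).
Local Notation L := (8 * #|S|).

Definition fresh_class b : {set T} := [set x | vertex_class x == b] :\: S.

Hypothesis S_gt0 : 0 < #|S|.
Hypothesis fresh_class_large : forall b, b < 4 -> l * L <= #|fresh_class b|.

(* A block of 8 slots holds at most one vertex of S, among its first 4 slots, so no
   two vertices of S are consecutive on a route. *)
Definition anchor q := nth x0 (enum S) (q %/ 8).
Definition anchor_slot q := vertex_class (anchor q) == q %% 8.
Definition fresh (i : 'I_l) q := nth x0 (enum (fresh_class (q %% 4))) (i * L + q).
Definition route (i : 'I_l) q := if anchor_slot q then anchor q else fresh i q.

Lemma anchor_mem q : q < L -> anchor q \in S.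
Proof. by move=> qL; rewrite -mem_enum mem_nth // -cardE ltn_divLR // mulnC. Qed.

Lemma fresh_index_lt (i : 'I_l) q : q < L -> i * L + q < #|fresh_class (q %% 4)|.
Proof.
move=> qL; have := fresh_class_large (ltn_pmod q (isT : 0 < 4)).
have := leq_mul (ltn_ord i) (leqnn L); lia.
Qed.

Lemma fresh_mem i q : q < L -> fresh i q \in fresh_class (q %% 4).
Proof. by move=> qL; rewrite -mem_enum mem_nth // -cardE fresh_index_lt. Qed.

Lemma fresh_inj i j q q' : q < L -> q' < L -> fresh i q = fresh j q' -> i = j /\ q = q'.
Proof.
move=> qL q'L fresh_eq.
have same_class : q %% 4 = q' %% 4.
  have := fresh_mem i qL; have := fresh_mem j q'L.
  by rewrite fresh_eq !inE => /andP[_ /eqP->] /andP[_ /eqP].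
have iq := fresh_index_lt i qL; have jq' := fresh_index_lt j q'L.
rewrite same_class in iq.
move: fresh_eq; rewrite /fresh same_class => /eqP.
rewrite nth_uniq ?enum_uniq -?cardE // => /eqP idx.
have L_gt0 : 0 < L by lia.
have ij : i = j :> nat.
  by have := congr1 (divn^~ L) idx; rewrite !divnMDl // !divn_small ?addn0.
by split; [apply: ord_inj | move: idx; rewrite ij => /addnI].
Qed.

Lemma vertex_class_route i q : q < L -> vertex_class (route i q) = q %% 4.
Proof.
move=> qL; rewrite /route /anchor_slot; case: eqP => [slot | _].
  by have := vertex_class_lt4 (anchor q); lia.
by have := fresh_mem i qL; rewrite !inE => /andP[_ /eqP].
Qed.

Lemma route_mem_S i q : q < L -> (route i q \in S) = anchor_slot q.
Proof.
move=> qL; rewrite /route; case: ifP => _; first exact: anchor_mem.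
by have := fresh_mem i qL; rewrite !inE => /andP[/negbTE].
Qed.

Lemma route_inj i q q' : q < L -> q' < L -> route i q = route i q' -> q = q'.
Proof.
move=> qL q'L route_eq.
have slots : anchor_slot q = anchor_slot q'.
  by rewrite -(route_mem_S i qL) -(route_mem_S i q'L) route_eq.
move: route_eq; rewrite /route slots; case: ifP => [slot_q' anchor_eq | _ /fresh_inj[]//].
have slot_q : anchor_slot q by rewrite slots.
have mod8 : q %% 8 = q' %% 8.
  by move: slot_q slot_q'; rewrite /anchor_slot anchor_eq => /eqP <- /eqP.
have div8 : q %/ 8 = q' %/ 8.
  move: anchor_eq; rewrite /anchor => /eqP.
  by rewrite nth_uniq ?enum_uniq -?cardE ?ltn_divLR // ?(mulnC #|S|) // => /eqP.
by rewrite (divn_eq q 8) (divn_eq q' 8) div8 mod8.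
Qed.

Lemma route_private i j q q' : q < L -> q' < L ->
  route i q = route j q' -> route i q \notin S -> i = j.
Proof.
move=> qL q'L route_eq private_q.
have not_slot_q : ~~ anchor_slot q by rewrite -(route_mem_S i qL).
have not_slot_q' : ~~ anchor_slot q' by rewrite -(route_mem_S j q'L) -route_eq.
by move: route_eq; rewrite /route (negbTE not_slot_q) (negbTE not_slot_q') => /fresh_inj[].
Qed.

Lemma route_covers i s : s \in S -> exists2 q, q < L & route i q = s.
Proof.
move=> sS; set u := index s (enum S); have class_s := vertex_class_lt4 s.
have u_lt : u < #|S| by rewrite cardE index_mem mem_enum.
have anchor_s : anchor (8 * u + vertex_class s) = s.
  by rewrite /anchor (_ : _ %/ 8 = u) ?nth_index ?mem_enum //; lia.
exists (8 * u + vertex_class s); first lia.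
by rewrite /route /anchor_slot anchor_s (_ : _ %% 8 = vertex_class s) ?eqxx //; lia.
Qed.

Lemma anchor_slots_apart q : ~~ (anchor_slot q && anchor_slot q.+1).
Proof.
apply/negP => /andP[]; rewrite /anchor_slot /anchor => /eqP slot_q /eqP.
have := vertex_class_lt4 (nth x0 (enum S) (q %/ 8)); rewrite slot_q => q_mod8.
have -> : q.+1 %/ 8 = q %/ 8 by lia.
lia.
Qed.

Local Notation route_vertices i := (path_vertices L (route i)).
Local Notation route_edges i := (path_edges L (route i)).

Lemma route_tree i : is_tree (K_edges M n) (route_vertices i) (route_edges i).
Proof.
apply: path_tree => [q q' qL q'L | | q qL]; first exact: route_inj.
- lia.
- by apply: class_step_edge; apply: vertex_class_route => //; exact: ltnW.
Qed.

Lemma route_proper i : proper_tree parity_coloring (route_edges i).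
Proof.
apply: path_proper => [q q' qL q'L | q qL]; first exact: route_inj.
have coloring r : r.+1 < L -> parity_coloring [set route i r; route i r.+1] = odd r.
  by move=> rL; apply: class_step_coloring; apply: vertex_class_route => //; exact: ltnW.
by rewrite !coloring ?oddS //; [case: odd | exact: ltnW].
Qed.

Lemma route_edges_disjoint i j : i != j -> route_edges i :&: route_edges j = set0.
Proof.
move=> i_j; apply/setP => e; rewrite !inE; apply/negP => /andP[/path_edgesP[q qL ->] e_j].
have [r [rL r_e r_private]] : exists r, [/\ r < L,
    route i r \in [set route i q; route i q.+1] & route i r \notin S].
  have := anchor_slots_apart q; rewrite -(route_mem_S i (ltnW qL)) -(route_mem_S i qL).
  case/nandP => private; [exists q | exists q.+1]; split => //.
  - exact: ltnW.
  - exact: set21.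
  - exact: set22.
have /path_verticesP[r' r'L] := subsetP (path_edge_sub e_j) _ r_e.
by move/(route_private rL r'L)/(_ r_private)/eqP; apply/negP.
Qed.

Lemma route_vertices_cover i : S \subset route_vertices i.
Proof.
by apply/subsetP => s /(route_covers i)[q qL <-]; apply/path_verticesP; exists q.
Qed.

Lemma route_vertices_meet i j : i != j -> route_vertices i :&: route_vertices j = S.
Proof.
move=> i_j; apply/setP => x; rewrite inE; apply/andP/idP => [[]|xS].
  case/path_verticesP => q qL -> /path_verticesP[q' q'L route_eq].
  by apply: contraTT i_j => /(route_private qL q'L route_eq) ->; rewrite eqxx.
by split; apply: (subsetP (route_vertices_cover _)).
Qed.

Lemma route_system :
  exists (V : 'I_l -> {set T}) (F : 'I_l -> {set {set T}}),
    [/\ (forall i, is_tree (K_edges M n) (V i) (F i)),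
        (forall i, S \subset V i),
        (forall i, proper_tree parity_coloring (F i)) &
        (forall i j, i != j -> F i :&: F j = set0 /\ V i :&: V j = S)].
Proof.
exists (fun i => route_vertices i), (fun i => route_edges i); split.
- exact: route_tree.
- exact: route_vertices_cover.
- exact: route_proper.
- by move=> i j i_j; rewrite route_edges_disjoint ?route_vertices_meet.
Qed.

End Routes.
End CompleteBipartite.

Lemma kl_good_parity_coloring M n k l : 0 < k -> n <= M -> l * (8 * k) + k <= n./2 ->
  kl_good (K_edges M n) k l (@parity_coloring M n).
Proof.
move=> k_gt0 nM n_large S cardS.
have [x0 _] : exists x0, x0 \in S by apply/card_gt0P; rewrite cardS.
apply: (route_system x0); first by rewrite cardS.
move=> b b_lt4; rewrite cardsD cardS.
have meet_le_k : #|[set x | vertex_class x == b] :&: S| <= k.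
  by rewrite -cardS subset_leq_card ?subsetIr.
by apply: leq_trans (leq_sub (card_vertex_class b_lt4 nM) meet_le_k); lia.
Qed.

Theorem theorem3p2 (m : nat -> nat) (r : R)
  (hr : (1 <= r)%R)
  (hm : bigO_pow m r)
  (hnm : forall n : nat, (n <= m n)%N)
  (k l : nat) (hk : (3 <= k)%N) (hl : (0 < l)%N) :
  exists N3 : nat, (0 < N3)%N /\
    forall n : nat, (N3 <= n)%N -> px_eq (K_edges (m n) n) k l 2.
Proof.
exists (18 * l * k); split=> [|n n_ge]; first lia.
have n_le_m := hnm n; have k_le_lk : k <= l * k := leq_pmull k hl.
split.
- exists (@parity_coloring (m n) n); split; first by move=> e _; rewrite ltnS leq_b1.
  apply: kl_good_parity_coloring => //; lia.
- move=> q q_lt2 [c [c_lt_q c_good]].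
  suff : 1 < q by lia.
  by apply: kl_good_colors_gt1 hl c_lt_q c_good; rewrite card_sum !card_ord hk /=; lia.
Qed.
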